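(* Let $K_n$, $C_n$ and $W_n$ be, respectively, the complete graph, the cycle and the wheel on $n\geq 3$ vertices. Then for every integer $k$ with $3\leq k\leq n$, $px_k(K_n)=px_k(C_n)=px_k(W_n)=2$.
   Context: All graphs are finite, simple, undirected and connected. An edge-coloring of a graph assigns a color to each edge (adjacent edges may receive the same color). A tree in an edge-colored graph is proper if any two adjacent edges of the tree receive different colors. For $S\subseteq V(G)$, an $S$-tree is a subgraph of $G$ that is a tree containing all vertices of $S$. For a connected graph $G$ of order $n$ and an integer $k$ with $2\le k\le n$, an edge-coloring of $G$ is a $k$-proper coloring if for every set $S$ of $k$ vertices of $G$ there exists a proper $S$-tree in $G$. The $k$-proper index $px_k(G)$ is the minimum number of colors used in a $k$-proper coloring of $G$. The wheel $W_n$ on $n$ vertices consists of a cycle on $n-1$ vertices together with one additional vertex adjacent to all vertices of that cycle. *)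

From mathcomp Require Import all_boot.
Set Implicit Arguments. Unset Strict Implicit. Unset Printing Implicit Defensive.

(* A graph on a finite vertex type T is given by an adjacency relation
   e : rel T (symmetric, irreflexive for the concrete graphs below).
   An edge-coloring is a function c : T -> T -> nat, symmetric on edges;
   the color of edge {x,y} is c x y. *)

Definition edge_coloring (T : finType) (e : rel T) (c : T -> T -> nat) : Prop :=
  forall x y, e x y -> c x y = c y x.

Definition colors_used (T : finType) (e : rel T) (c : T -> T -> nat) : nat :=
  size (undup [seq c x y | x <- enum T, y <- [seq y <- enum T | e x y]]).

Definition subgraph (T : finType) (e : rel T) (VS : {set T}) (ES : rel T) : Prop :=
  (forall x y, ES x y = ES y x) /\
  (forall x y, ES x y -> [&& e x y, x \in VS & y \in VS]).

Definition is_tree (T : finType) (VS : {set T}) (ES : rel T) : Prop :=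
  VS != set0 /\
  (forall x y, x \in VS -> y \in VS -> connect ES x y) /\
  (forall s : seq T, 3 <= size s -> uniq s -> ~~ cycle ES s).

Definition proper_tree (T : finType) (c : T -> T -> nat) (ES : rel T) : Prop :=
  forall x y z, ES x y -> ES x z -> y != z -> c x y != c x z.

Definition k_proper_coloring (T : finType) (e : rel T) (k : nat)
  (c : T -> T -> nat) : Prop :=
  edge_coloring e c /\
  forall S : {set T}, #|S| = k ->
    exists (VS : {set T}) (ES : rel T),
      subgraph e VS ES /\ is_tree VS ES /\ S \subset VS /\ proper_tree c ES.

Definition px_eq (T : finType) (e : rel T) (k m : nat) : Prop :=
  (exists c, k_proper_coloring e k c /\ colors_used e c = m) /\
  (forall c, k_proper_coloring e k c -> m <= colors_used e c).

Definition complete_graph (n : nat) : rel 'I_n := fun i j => i != j.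

Definition cycle_graph (n : nat) : rel 'I_n :=
  fun i j => (i != j) &&
    ((val j == (val i).+1 %% n) || (val i == (val j).+1 %% n)).

(* wheel: hub is vertex n-1, rim is the cycle 0 - 1 - ... - (n-2) - 0 *)
Definition wheel_graph (n : nat) : rel 'I_n :=
  fun i j => (i != j) &&
    [|| val i == n.-1, val j == n.-1,
        (val j == (val i).+1 %% n.-1) | (val i == (val j).+1 %% n.-1)].

Arguments complete_graph n : clear implicits.
Arguments cycle_graph n : clear implicits.
Arguments wheel_graph n : clear implicits.

From mathcomp Require Import all_boot.
From mathcomp Require Import zify.

Set Implicit Arguments.
Unset Strict Implicit.
Unset Printing Implicit Defensive.

(* All three graphs contain the Hamiltonian path 0 - 1 - ... - (n-1).
   Colouring its edge {i, i+1} by the parity of i makes that path a proper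
   spanning tree, so two colours suffice for every k.  Conversely, in a proper
   tree using a single colour no vertex has two neighbours, so a connected
   such tree has at most two vertices and cannot contain k >= 3 vertices. *)

Lemma next_neq_prev (T : eqType) (p : seq T) x :
  uniq p -> 3 <= size p -> x \in p -> next p x != prev p x.
Proof.
move=> uniq_p size_p /rot_to [i q def_p].
rewrite -(next_rot i uniq_p) -(prev_rot i uniq_p) def_p.
have {uniq_p} : uniq (x :: q) by rewrite -def_p rot_uniq.
have {size_p} : 2 <= size q by rewrite -ltnS -[(size q).+1]/(size (x :: q)) -def_p size_rot.
case: q {def_p} => [|y [|z r]] // _ uniq_xq; apply/eqP => next_prev_x.
have prev_x : prev [:: x, y, z & r] x = y by rewrite -next_prev_x /= eqxx.
have : next [:: x, y, z & r] y = x by rewrite -{2}prev_x next_prev.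
move: uniq_xq; rewrite /= !inE !negb_or => /andP [/and3P [xNy xNz _] _].
by rewrite /= eq_sym (negbTE xNy) eqxx => z_x; rewrite z_x eqxx in xNz.
Qed.

Section PathGraph.

Variable n : nat.

Definition path_graph : rel 'I_n :=
  fun i j => (j == i.+1 :> nat) || (i == j.+1 :> nat).

Definition alternating_coloring (i j : 'I_n) : nat := minn i j %% 2.

Lemma path_graph_sym : symmetric path_graph.
Proof. by move=> i j; rewrite /path_graph orbC. Qed.

Lemma connect_path_graph i j : connect path_graph i j.
Proof.
wlog le_ij : i j / i <= j.
  move=> IH; have [/IH//|/ltnW/IH] := leqP i j.
  by rewrite (sym_connect_sym path_graph_sym).
case: j le_ij => m; elim: m => [|m IHm] lt_mn /= le_im.
  by rewrite (_ : i = Ordinal lt_mn) //; apply: val_inj => /=; lia.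
have [le_i_m | lt_m_i] := leqP i m; last first.
  by rewrite (_ : i = Ordinal lt_mn) //; apply: val_inj => /=; lia.
apply: connect_trans (IHm (ltnW lt_mn) le_i_m) (connect1 _).
by rewrite /path_graph eqxx.
Qed.

(* The largest vertex of a cycle would need two distinct smaller neighbours. *)
Lemma path_graph_acyclic (s : seq 'I_n) :
  3 <= size s -> uniq s -> ~~ cycle path_graph s.
Proof.
move=> size_s uniq_s; apply/negP => cycle_s.
have [x0 s_x0] : exists x0, x0 \in s.
  by case: s size_s {uniq_s cycle_s} => // x0; exists x0; rewrite mem_head.
case: (arg_maxnP (@nat_of_ord n) s_x0) => x s_x max_x.
have le_nx : next s x <= x by apply: max_x; rewrite -[_ _ _]/(_ \in s) mem_next.
have le_px : prev s x <= x by apply: max_x; rewrite -[_ _ _]/(_ \in s) mem_prev.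
have := next_cycle cycle_s s_x; have := prev_cycle cycle_s s_x.
rewrite /path_graph => /orP[|] /eqP x_p /orP[|] /eqP n_x; try lia.
have : next s x = prev s x by apply: ord_inj; lia.
by apply/eqP; apply: next_neq_prev.
Qed.

Lemma path_graph_proper : proper_tree alternating_coloring path_graph.
Proof.
move=> x y z; rewrite /path_graph /alternating_coloring => e_xy e_xz.
apply: contra => /eqP c_yz; apply/eqP/ord_inj.
by move: e_xy e_xz => /orP[|] /eqP ? /orP[|] /eqP ?; lia.
Qed.

End PathGraph.

Arguments path_graph n : clear implicits.
Arguments alternating_coloring n : clear implicits.

Lemma path_graph_sub n (e : rel 'I_n) :
  symmetric e -> (forall i j : 'I_n, j = i.+1 :> nat -> e i j) ->
  forall i j, path_graph n i j -> e i j.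
Proof.
move=> e_sym e_succ i j /orP [/eqP|/eqP] succ; first exact: e_succ.
by rewrite e_sym; apply: e_succ.
Qed.

Lemma ord_succ_neq n (i j : 'I_n) : j = i.+1 :> nat -> i != j.
Proof. by move=> succ; apply/eqP => i_j; rewrite i_j in succ; lia. Qed.

Section ColorCount.

Variables (T : finType) (e : rel T) (c : T -> T -> nat).

Lemma mem_colors_used x y :
  e x y -> c x y \in undup [seq c x y | x <- enum T, y <- [seq y <- enum T | e x y]].
Proof.
move=> e_xy; rewrite mem_undup; apply/allpairsPdep; exists x, y.
by rewrite mem_enum mem_filter e_xy mem_enum.
Qed.

Lemma colors_used_ge2 x y z :
  e x y -> e x z -> c x y != c x z -> 2 <= colors_used e c.
Proof.
move=> e_xy e_xz c_yz; apply: (@uniq_leq_size _ [:: c x y; c x z]).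
  by rewrite /= inE c_yz.
by apply/allP; rewrite /= !mem_colors_used.
Qed.

Lemma colors_used_le m : (forall x y, e x y -> c x y < m) -> colors_used e c <= m.
Proof.
move=> lt_c_m; rewrite -(size_iota 0 m); apply: uniq_leq_size; first exact: undup_uniq.
move=> v; rewrite mem_undup => /allpairsPdep [x [y [_]]].
by rewrite mem_filter mem_iota => /andP [e_xy _] ->; rewrite lt_c_m.
Qed.

End ColorCount.

Section BranchingVertex.

Variables (T : finType) (r : rel T).
Hypothesis r_sym : symmetric r.

Lemma connect_no_branch x y :
  (forall u v w, r u v -> r u w -> v = w) -> connect r x y -> x = y \/ r x y.
Proof.
move=> no_branch /connectP [p]; elim: p x => [|x1 p IHp] x /=; first by left.
case/andP => r_x_x1 /IHp IH /IH [<-|r_x1_y]; first by right.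
by left; apply: (no_branch x1); rewrite // r_sym.
Qed.

Lemma branching_vertex a b d :
  a != b -> a != d -> b != d -> connect r a b -> connect r a d ->
  exists x y z, [/\ r x y, r x z & y != z].
Proof.
move=> aNb aNd bNd r_ab r_ad.
case: (boolP [exists x, exists y, exists z, [&& r x y, r x z & y != z]]).
  by case/existsP => x /existsP [y /existsP [z /and3P]]; exists x, y, z.
rewrite negb_exists => /forallP no_branch.
have {}no_branch u v w : r u v -> r u w -> v = w.
  move=> r_uv r_uw; apply/eqP; apply: contraNT (no_branch u) => vNw.
  by apply/existsP; exists v; apply/existsP; exists w; rewrite r_uv r_uw vNw.
have [/eqP|r_ab'] := connect_no_branch no_branch r_ab; first by rewrite (negbTE aNb).
have [/eqP|r_ad'] := connect_no_branch no_branch r_ad; first by rewrite (negbTE aNd).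
by move: bNd; rewrite (no_branch _ _ _ r_ab' r_ad') eqxx.
Qed.

End BranchingVertex.

Lemma exists_set_of_card (T : finType) k : k <= #|T| -> exists S : {set T}, #|S| = k.
Proof.
case/card_geqP => s [uniq_s size_s _]; exists [set x in s].
by rewrite cardsE -size_s; apply/card_uniqP.
Qed.

Lemma k_proper_colors_ge2 (T : finType) (e : rel T) k c :
  3 <= k -> k <= #|T| -> k_proper_coloring e k c -> 2 <= colors_used e c.
Proof.
move=> k_ge3 k_le_T [_ proper_S].
have [S card_S] := exists_set_of_card k_le_T.
have [VS [ES [[ES_sym ES_sub] [[_ [ES_conn _]] [sub_S ES_proper]]]]] := proper_S S card_S.
have : 2 < #|S| by rewrite card_S.
case/card_gt2P => a [b [d [[Sa Sb Sd] [aNb bNd dNa]]]].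
have VS_S u : u \in S -> u \in VS by move/(subsetP sub_S).
rewrite eq_sym in dNa.
have [x [y [z [ES_xy ES_xz yNz]]]] := branching_vertex ES_sym aNb dNa bNd
  (ES_conn _ _ (VS_S _ Sa) (VS_S _ Sb)) (ES_conn _ _ (VS_S _ Sa) (VS_S _ Sd)).
apply: (colors_used_ge2 (x := x) (y := y) (z := z)).
- by case/and3P: (ES_sub _ _ ES_xy).
- by case/and3P: (ES_sub _ _ ES_xz).
exact: ES_proper.
Qed.

Section PathSupergraph.

Variables (n : nat) (e : rel 'I_n).
Hypothesis path_sub : forall i j, path_graph n i j -> e i j.

Lemma alternating_k_proper k : 0 < n -> k_proper_coloring e k (alternating_coloring n).
Proof.
move=> n_gt0; split=> [x y _|S _]; first by rewrite /alternating_coloring minnC.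
exists setT, (path_graph n); split; [|split; [|split]].
- by split=> [|x y /path_sub ->]; [exact: path_graph_sym | rewrite !in_setT].
- split; first by apply/set0Pn; exists (Ordinal n_gt0).
  by split=> [x y _ _|]; [exact: connect_path_graph | exact: path_graph_acyclic].
- exact: subsetT.
- exact: path_graph_proper.
Qed.

Lemma colors_used_alternating : 3 <= n -> colors_used e (alternating_coloring n) = 2.
Proof.
move=> n_ge3; apply/eqP; rewrite eqn_leq; apply/andP; split.
  by apply: colors_used_le => x y _; rewrite ltn_mod.
pose i m (lt_m3 : m < 3) := Ordinal (leq_trans lt_m3 n_ge3).
by apply: (@colors_used_ge2 _ _ _ (i 1 isT) (i 0 isT) (i 2 isT)); rewrite ?path_sub.
Qed.

Lemma px_eq_path_supergraph k : 3 <= n -> 3 <= k -> k <= n -> px_eq e k 2.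
Proof.
move=> n_ge3 k_ge3 k_le_n; split.
  exists (alternating_coloring n); split; last exact: colors_used_alternating.
  by apply: alternating_k_proper; apply: ltn_trans n_ge3.
by move=> c; apply: k_proper_colors_ge2; rewrite ?card_ord.
Qed.

End PathSupergraph.

Lemma path_graph_sub_complete n i j : path_graph n i j -> complete_graph n i j.
Proof.
apply: path_graph_sub => [a b|a b /ord_succ_neq //].
by rewrite /complete_graph eq_sym.
Qed.

Lemma path_graph_sub_cycle n i j : path_graph n i j -> cycle_graph n i j.
Proof.
apply: path_graph_sub => [a b|a b succ]; first by rewrite /cycle_graph eq_sym orbC.
by rewrite /cycle_graph ord_succ_neq // modn_small -succ ?eqxx.
Qed.

Lemma path_graph_sub_wheel n i j : path_graph n i j -> wheel_graph n i j.
Proof.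
apply: path_graph_sub => [a b|a b succ].
  by rewrite /wheel_graph eq_sym; congr (_ && _); do 4 case: (_ == _).
rewrite /wheel_graph ord_succ_neq //=.
have [->|b_rim] := eqVneq (b : nat) n.-1; first by rewrite ?eqxx ?orbT.
have lt_b_rim : b < n.-1 by have := ltn_ord b; lia.
by rewrite modn_small -succ ?eqxx ?orbT.
Qed.

Theorem mainTheorem8 (n k : nat) (hn : 3 <= n) (hk3 : 3 <= k) (hkn : k <= n) :
  px_eq (complete_graph n) k 2 /\
  px_eq (cycle_graph n) k 2 /\
  px_eq (wheel_graph n) k 2.
Proof.
split; last split; apply: px_eq_path_supergraph => //.
- exact: path_graph_sub_complete.
- exact: path_graph_sub_cycle.
- exact: path_graph_sub_wheel.
Qed.
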